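(* Let $G_1,G_2$ be two connected graphs that are cospectral with respect to the Laplacian matrix. If $Z(G_1)\neq Z(G_2)$, then for every $r\geq 1$ the joins $G_1\vee K_r$ and $G_2\vee K_r$ are cospectral with respect to the Laplacian matrix and satisfy $Z(G_1\vee K_r)\neq Z(G_2\vee K_r)$. Likewise, if $Z_{-}(G_1)\neq Z_{-}(G_2)$, then for every $r\geq 1$ the joins $G_1\vee K_r$ and $G_2\vee K_r$ are Laplacian-cospectral and satisfy $Z_{-}(G_1\vee K_r)\neq Z_{-}(G_2\vee K_r)$.
   Context: Graphs are finite, simple, undirected. The Laplacian matrix of $G$ is $L=D-A$, with $D$ the diagonal degree matrix and $A$ the adjacency matrix; graphs are Laplacian-cospectral if their Laplacian matrices have the same multiset of eigenvalues. The join $G\vee H$ is the disjoint union of $G$ and $H$ together with all edges $\{u,v\}$, $u\in V(G)$, $v\in V(H)$. $K_r$ is the complete graph on $r$ vertices. The zero forcing number $Z(G)$ is the minimum size of a set $S\subseteq V(G)$ such that, if the vertices of $S$ are colored blue and all others white, repeated application of the rule ''a blue vertex with exactly one white neighbor forces that neighbor to become blue'' eventually makes every vertex blue. The skew zero forcing number $Z_{-}(G)$ is defined in the same way but with the rule ''any vertex (blue or white) that has exactly one white neighbor forces that neighbor to become blue''. *)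

From HB Require Import structures.
From mathcomp Require Import all_boot all_order all_algebra all_field.
Set Implicit Arguments. Unset Strict Implicit. Unset Printing Implicit Defensive.
Import GRing.Theory Num.Theory.
Local Open Scope ring_scope.

Definition simple_graph n (G : rel 'I_n) : Prop :=
  symmetric G /\ irreflexive G.

Definition connected_graph n (G : rel 'I_n) : Prop :=
  forall u v : 'I_n, connect G u v.

Definition laplacian n (G : rel 'I_n) : 'M[algC]_n :=
  \matrix_(i, j)
    (if i == j then (#|[set k | G i k]|)%:R else - ((G i j : nat)%:R)).

(* Laplacian-cospectral: same number of vertices and the same multiset of
   Laplacian eigenvalues (eigenvalues counted with algebraic multiplicity,
   i.e. multiplicity as roots of the characteristic polynomial). *)
Definition L_cospectral n1 n2 (G1 : rel 'I_n1) (G2 : rel 'I_n2) : Prop :=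
  n1 = n2 /\
  forall x : algC, mup x (char_poly (laplacian G1)) = mup x (char_poly (laplacian G2)).

(* Complete graph K_r on 'I_r and the join G \/ K_r on 'I_(n + r):
   vertices lshift = vertices of G, rshift = vertices of K_r. *)
Definition complete_graph r : rel 'I_r := fun a b => a != b.

Definition join_complete n (G : rel 'I_n) r : rel 'I_(n + r) :=
  fun u v =>
    match split u, split v with
    | inl a, inl b => G a b
    | inr a, inr b => complete_graph a b
    | _, _ => true
    end.

Arguments join_complete {n} G r.

Definition white_nbrs (T : finType) (G : rel T) (B : {set T}) (u : T) : {set T} :=
  [set w | G u w & w \notin B].

(* One round applying every available force of the standard rule
   (a blue vertex with exactly one white neighbour forces it). *)
Definition zf_step (T : finType) (G : rel T) (B : {set T}) : {set T} :=
  B :|: [set w | [exists u, (u \in B) && (white_nbrs G B u == [set w])]].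

Definition szf_step (T : finType) (G : rel T) (B : {set T}) : {set T} :=
  B :|: [set w | [exists u, white_nbrs G B u == [set w]]].

(* Final colouring: iterate until stable (#|T| rounds suffice). *)
Definition zf_closure (T : finType) (G : rel T) (S : {set T}) :=
  iter #|T| (zf_step G) S.
Definition szf_closure (T : finType) (G : rel T) (S : {set T}) :=
  iter #|T| (szf_step G) S.

Definition zero_forcing_set (T : finType) (G : rel T) (S : {set T}) : bool :=
  zf_closure G S == setT.
Definition skew_zero_forcing_set (T : finType) (G : rel T) (S : {set T}) : bool :=
  szf_closure G S == setT.

Definition Z (T : finType) (G : rel T) : nat :=
  \big[minn/#|T|]_(S : {set T} | zero_forcing_set G S) #|S|.
Definition Zskew (T : finType) (G : rel T) : nat :=
  \big[minn/#|T|]_(S : {set T} | skew_zero_forcing_set G S) #|S|.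

(* For a = y - r and d = y - n, the matrix y I - L(G \/ K_r) has the block form
   [[a I - L(G), 1], [1, d I - L(K_r)]] whose diagonal blocks have constant row
   sums a and d, so eliminating the all-ones blocks gives
     chi(G \/ K_r)(y) = (1 - n r / (a d)) chi(G)(y - r) chi(K_r)(y - n):
   the Laplacian characteristic polynomial of the join depends on G only through
   that of G.

   For G without isolated vertices, Z(G \/ K_r) = Z(G) + r, and likewise for Z_-.
   A forcing set of G together with K_r forces the join.  Conversely the G-part of
   a forcing set S of the join forces G, since a vertex of K_r that forces sees
   every white vertex of G, and a G-neighbour of the unique one can force it
   instead.  If S misses part of K_r, the first force out of S is so constrained
   (every vertex of K_r sees every white vertex) that the G-part of S is not a
   minimum forcing set, or is all of G, or -- only under the skew rule -- S misses
   exactly two vertices of the join; Z(G) <= n - 1 and Z_-(G) <= n - 2 close the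
   count. *)

From mathcomp Require Import all_boot all_order all_algebra all_field.
From mathcomp Require Import zify ring.
From Stdlib Require Import FunctionalExtensionality.
Set Implicit Arguments. Unset Strict Implicit. Unset Printing Implicit Defensive.
Import Order.TTheory GRing.Theory Num.Theory.

Section SplitSets.
Variables n r : nat.
Implicit Types (X Y : {set 'I_(n + r)}) (A : {set 'I_n}) (C : {set 'I_r}).

Definition lpart X : {set 'I_n} := [set a | lshift r a \in X].
Definition rpart X : {set 'I_r} := [set k | rshift n k \in X].
Definition join_set A C : {set 'I_(n + r)} :=
  [set v | match split v with inl a => a \in A | inr k => k \in C end].

Lemma card_lrpart X : #|X| = #|lpart X| + #|rpart X|.
Proof. by rewrite -sum1_card big_split_ord /= !sum1dep_card. Qed.

Lemma mem_join_set_l A C a : (lshift r a \in join_set A C) = (a \in A).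
Proof. by rewrite inE (unsplitK (inl a)). Qed.

Lemma mem_join_set_r A C k : (rshift n k \in join_set A C) = (k \in C).
Proof. by rewrite inE (unsplitK (inr k)). Qed.

Lemma lpart_join_set A C : lpart (join_set A C) = A.
Proof. by apply/setP => a; rewrite inE mem_join_set_l. Qed.

Lemma rpart_join_set A C : rpart (join_set A C) = C.
Proof. by apply/setP => k; rewrite inE mem_join_set_r. Qed.

Lemma lpartS X Y : X \subset Y -> lpart X \subset lpart Y.
Proof. by move=> XY; apply/subsetP => a; rewrite !inE => /(subsetP XY). Qed.

Lemma rpartS X Y : X \subset Y -> rpart X \subset rpart Y.
Proof. by move=> XY; apply/subsetP => k; rewrite !inE => /(subsetP XY). Qed.

Lemma lpartT : lpart [set: 'I_(n + r)] = setT.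
Proof. by apply/setP => a; rewrite !inE. Qed.

Lemma rpartT : rpart [set: 'I_(n + r)] = setT.
Proof. by apply/setP => k; rewrite !inE. Qed.

Lemma lrpart_eqT X : lpart X = setT -> rpart X = setT -> X = setT.
Proof.
move=> /setP XlT /setP XrT; apply/setP => v; rewrite inE.
by case: (split_ordP v) => [a ->|k ->]; [move: (XlT a) | move: (XrT k)]; rewrite !inE.
Qed.
End SplitSets.

Section JoinAdjacency.
Variables (n r : nat) (G : rel 'I_n).
Local Notation J := (join_complete G r).

Lemma join_complete_ll a b : J (lshift r a) (lshift r b) = G a b.
Proof. by rewrite /join_complete !(unsplitK (inl _)). Qed.

Lemma join_complete_lr a k : J (lshift r a) (rshift n k).
Proof. by rewrite /join_complete (unsplitK (inl _)) (unsplitK (inr _)). Qed.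

Lemma join_complete_rl k a : J (rshift n k) (lshift r a).
Proof. by rewrite /join_complete (unsplitK (inl _)) (unsplitK (inr _)). Qed.

Lemma join_complete_rr k l : J (rshift n k) (rshift n l) = complete_graph k l.
Proof. by rewrite /join_complete !(unsplitK (inr _)). Qed.

Lemma deg_join_complete_l a :
  #|[set v | J (lshift r a) v]| = #|[set b | G a b]| + r.
Proof.
rewrite card_lrpart; congr (_ + _).
  by apply: eq_card => b; rewrite !inE join_complete_ll.
by rewrite -[RHS]card_ord; apply: eq_card => k; rewrite !inE join_complete_lr.
Qed.

Lemma deg_join_complete_r k :
  #|[set v | J (rshift n k) v]| = #|[set l | complete_graph k l]| + n.
Proof.
rewrite card_lrpart addnC; congr (_ + _).
  by apply: eq_card => l; rewrite !inE join_complete_rr.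
by rewrite -[RHS]card_ord; apply: eq_card => a; rewrite !inE join_complete_rl.
Qed.
End JoinAdjacency.

Local Open Scope ring_scope.

Section ConstantRowSums.
Variable F : fieldType.

Lemma mul_const_mx m k p (a b : F) :
  (const_mx a : 'M_(m, k)) *m (const_mx b : 'M_(k, p)) = const_mx (a * b *+ k).
Proof.
apply/matrixP=> i j; rewrite !mxE; under eq_bigr do rewrite !mxE.
by rewrite sumr_const card_ord.
Qed.

Lemma mulmx_const_rowsum m k p (M : 'M[F]_(m, k)) c (b : F) :
  (forall i, \sum_j M i j = c) -> M *m (const_mx b : 'M_(k, p)) = const_mx (c * b).
Proof.
move=> rowM; apply/matrixP=> i j; rewrite !mxE; under eq_bigr do rewrite !mxE.
by rewrite -mulr_suml rowM.
Qed.

(* Matrix determinant lemma for the all-ones matrix: the bordered matrix [Z]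
   reduces by column operations to [A + const_mx e] and, since the all-ones
   vector is an eigenvector of [A] for [a], to a block triangular matrix with
   diagonal blocks [1 + e n / a] and [A]. *)
Lemma det_add_const_mx n (A : 'M[F]_n) a e :
  (forall i, \sum_j A i j = a) -> a != 0 ->
  \det (A + const_mx e) = (1 + e * n%:R / a) * \det A.
Proof.
move=> rowA a_neq0.
pose Z := block_mx (1%:M : 'M_1) (const_mx (- e)) (const_mx 1) A.
have reduce_col : block_mx 1%:M 0 (const_mx 1) 1%:M *m
    block_mx 1%:M (const_mx (- e)) 0 (A + const_mx e) = Z.
  rewrite mulmx_block !mulmx1 !mul1mx !mulmx0 mul0mx !addr0 mul_const_mx mul1r mulr1n.
  by rewrite addrCA -raddfD addNr raddf0 addr0.
have reduce_row : Z *m block_mx 1%:M 0 (const_mx (- a^-1)) 1%:M =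
    block_mx (1%:M + const_mx (e / a *+ n)) (const_mx (- e)) 0 A.
  rewrite mulmx_block !mulmx1 !mul1mx !mulmx0 mul_const_mx !add0r mulrNN.
  by rewrite (mulmx_const_rowsum _ _ rowA) (mulrN a) divff // -raddfD subrr raddf0.
have := congr1 determinant reduce_row; rewrite -reduce_col !det_mulmx.
rewrite !det_lblock !det_ublock !det1 det_mx11 !mxE /= !mul1r !mulr1 => ->.
by rewrite -mulr_natr mulrAC.
Qed.

Lemma det_block_const1 n r (A : 'M[F]_n) (D : 'M[F]_r) a d :
  (forall i, \sum_j A i j = a) -> (forall k, \sum_j D k j = d) ->
  a != 0 -> d != 0 ->
  \det (block_mx A (const_mx 1) (const_mx 1) D) =
    (1 - (n * r)%:R / (a * d)) * \det A * \det D.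
Proof.
move=> rowA rowD a_neq0 d_neq0.
have reduce_col : block_mx A (const_mx 1) (const_mx 1) D *m
    block_mx 1%:M 0 (const_mx (- d^-1)) 1%:M =
    block_mx (A + const_mx (- d^-1 *+ r)) (const_mx 1) 0 D.
  rewrite mulmx_block !mulmx1 !mulmx0 !add0r mul_const_mx mul1r.
  by rewrite (mulmx_const_rowsum _ _ rowD) mulrN divff // -raddfD subrr raddf0.
have := congr1 determinant reduce_col.
rewrite det_mulmx det_lblock !det1 !mulr1 det_ublock (det_add_const_mx _ rowA a_neq0) => ->.
by rewrite natrM; congr (_ * _ * _); field; apply/andP.
Qed.
End ConstantRowSums.

Lemma horner_char_poly (R : comNzRingType) n (M : 'M[R]_n) y :
  (char_poly M).[y] = \det (y%:M - M).
Proof.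
rewrite /char_poly -horner_evalE -det_map_mx; congr (\det _).
by apply/matrixP=> i j; rewrite !mxE /= horner_evalE !hornerE hornerMn hornerX.
Qed.

Lemma poly_eq_on_nat (R : numDomainType) (p q : {poly R}) k :
  (forall m, (k <= m)%N -> p.[m%:R] = q.[m%:R]) -> p = q.
Proof.
move=> pq; apply/eqP; rewrite -subr_eq0; apply/eqP.
pose rs := [seq (k + i)%:R : R | i <- iota 0 (size (p - q))].
apply: (@roots_geq_poly_eq0 _ _ rs); last by rewrite size_map size_iota.
  apply/allP => _ /mapP [i _ ->].
  by rewrite /root hornerD hornerN pq ?leq_addr // subrr.
by rewrite map_inj_uniq ?iota_uniq // => i j /eqP; rewrite eqr_nat eqn_add2l => /eqP.
Qed.

Lemma monic_mup_eq (F : closedFieldType) (p q : {poly F}) :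
  p \is monic -> q \is monic -> (forall x, mup x p = mup x q) -> p = q.
Proof.
move=> /monicP p1 /monicP q1 mu_pq.
have [s] := closed_field_poly_normal p; rewrite p1 scale1r => ps.
have [t] := closed_field_poly_normal q; rewrite q1 scale1r => qt.
rewrite ps qt; apply: perm_big; apply/allP => x _ /=; apply/eqP.
by rewrite -!mu_prod_XsubC -ps -qt.
Qed.

Lemma rowsum_laplacian n (G : rel 'I_n) i :
  irreflexive G -> \sum_j laplacian G i j = 0.
Proof.
move=> irrG; rewrite (bigD1 i) //= mxE eqxx.
have -> : (#|[set k | G i k]|)%:R = \sum_(j | j != i) ((G i j : nat)%:R : algC).
  rewrite -sum1dep_card natr_sum big_mkcond [RHS]big_mkcond /=; apply: eq_bigr => j _.
  by case: (eqVneq j i) => [->|_]; rewrite ?irrG //; case: (G i j).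
rewrite -big_split big1 //= => j /negPf ji.
by rewrite mxE eq_sym ji subrr.
Qed.

Lemma rowsum_scalar_sub_laplacian n (G : rel 'I_n) (c : algC) i :
  irreflexive G -> \sum_j (c%:M - laplacian G) i j = c.
Proof.
move=> irrG; rewrite (eq_bigr (fun j => c%:M i j - laplacian G i j)); last first.
  by move=> j _; rewrite !mxE.
rewrite big_split /= sumrN rowsum_laplacian // subr0 (bigD1 i) //= mxE eqxx.
by rewrite big1 ?addr0 // => j /negPf ji; rewrite mxE eq_sym ji.
Qed.

Lemma laplacian_join_complete n r (G : rel 'I_n) :
  laplacian (join_complete G r) =
    block_mx (laplacian G + r%:R%:M) (const_mx (-1))
             (const_mx (-1)) (laplacian (@complete_graph r) + n%:R%:M).
Proof.
apply/matrixP => u v.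
case: (split_ordP u) => [a ->|k ->]; case: (split_ordP v) => [b ->|l ->].
- rewrite block_mxEul !mxE eq_lshift join_complete_ll deg_join_complete_l.
  by case: eqP => _; rewrite ?natrD ?addr0.
- by rewrite block_mxEur !mxE eq_lrshift join_complete_lr.
- by rewrite block_mxEdl !mxE eq_rlshift join_complete_rl.
- rewrite block_mxEdr !mxE eq_rshift join_complete_rr deg_join_complete_r.
  by case: eqP => _; rewrite ?natrD ?addr0.
Qed.

Lemma horner_char_poly_join_complete n r (G : rel 'I_n) (y : algC) :
  irreflexive G -> y != r%:R -> y != n%:R ->
  (char_poly (laplacian (join_complete G r))).[y] =
    (1 - (n * r)%:R / ((y - r%:R) * (y - n%:R))) *
    (char_poly (laplacian G)).[y - r%:R] *
    (char_poly (laplacian (@complete_graph r))).[y - n%:R].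
Proof.
move=> irrG yr yn.
have irrK : irreflexive (@complete_graph r) by move=> k; rewrite /complete_graph eqxx.
rewrite !horner_char_poly laplacian_join_complete (scalar_mx_block n r y).
rewrite opp_block_mx add_block_mx !opprD !addrA -!raddfB /= sub0r opprK.
rewrite ![_ - laplacian _ - _]addrAC -!raddfB /=.
apply: det_block_const1; rewrite ?subr_eq0 // => i; exact: rowsum_scalar_sub_laplacian.
Qed.

Lemma char_poly_join_complete n r (G1 G2 : rel 'I_n) :
  irreflexive G1 -> irreflexive G2 ->
  char_poly (laplacian G1) = char_poly (laplacian G2) ->
  char_poly (laplacian (join_complete G1 r)) = char_poly (laplacian (join_complete G2 r)).
Proof.
move=> irr1 irr2 chiG; apply: (@poly_eq_on_nat _ _ _ (n + r).+1) => m lt_nr_m.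
have mr : m%:R != r%:R :> algC by rewrite eqr_nat; apply: contraTneq lt_nr_m => ->; lia.
have mn : m%:R != n%:R :> algC by rewrite eqr_nat; apply: contraTneq lt_nr_m => ->; lia.
by rewrite !horner_char_poly_join_complete // chiG.
Qed.

Lemma L_cospectral_join_complete n1 n2 (G1 : rel 'I_n1) (G2 : rel 'I_n2) r :
  irreflexive G1 -> irreflexive G2 -> L_cospectral G1 G2 ->
  L_cospectral (join_complete G1 r) (join_complete G2 r).
Proof.
move=> irr1 irr2 [n12 mu12]; subst n2; split=> // x.
have chiG : char_poly (laplacian G1) = char_poly (laplacian G2).
  by apply: monic_mup_eq => //; exact: char_poly_monic.
by rewrite (char_poly_join_complete r irr1 irr2 chiG).
Qed.

Local Close Scope ring_scope.

Section IterClosure.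
Variables (T : finType) (f : {set T} -> {set T}).
Implicit Types S B C : {set T}.
Hypothesis f_ext : forall B, B \subset f B.
Hypothesis f_mono : forall B C, B \subset C -> f B \subset f C.

Lemma iter_fixed S : f (iter #|T| f S) = iter #|T| f S.
Proof.
have [//|fullT] : f (iter #|T| f S) = iter #|T| f S \/ #|T| <= #|iter #|T| f S|.
  elim: #|T| => [|k [IH|IH]] /=; [by right | by left; rewrite IH |].
  have [fixed|moved] := eqVneq (f (iter k f S)) (iter k f S); first by left; rewrite fixed.
  right; apply: leq_ltn_trans IH (proper_card _).
  by rewrite properEneq eq_sym moved f_ext.
have -> : iter #|T| f S = setT by apply/eqP; rewrite eqEcard subsetT cardsT.
by apply/eqP; rewrite eqEcard subsetT subset_leq_card.
Qed.

Lemma iter_eqTP S :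
  reflect (forall B, S \subset B -> f B \subset B -> B = setT) (iter #|T| f S == setT).
Proof.
apply: (iffP eqP) => [iterT B SB fB | closedT].
  apply/eqP; rewrite -subTset -iterT; elim: #|T| => //= k IH.
  exact: subset_trans (f_mono IH) fB.
apply: closedT; last by rewrite iter_fixed.
by elim: #|T| => //= k IH; exact: subset_trans IH (f_ext _).
Qed.
End IterClosure.

Section ZeroForcing.
Variables (T : finType) (skew : bool) (G : rel T).
Implicit Types S A B C : {set T}.

Definition force_step B : {set T} :=
  B :|: [set w | [exists u, (skew || (u \in B)) && (white_nbrs G B u == [set w])]].

Definition stalled B : bool :=
  [forall u, (skew || (u \in B)) ==> (#|white_nbrs G B u| != 1)].

Definition forcing_set S : Prop := forall B, S \subset B -> stalled B -> B = setT.

Definition zf_number : nat :=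
  \big[minn/#|T|]_(S : {set T} | iter #|T| force_step S == setT) #|S|.

Lemma force_step_mono B C : B \subset C -> force_step B \subset force_step C.
Proof.
move=> BC; apply/subsetP => w; rewrite !inE => /orP [/(subsetP BC) -> //|].
case/existsP => u /andP [u_forces /eqP wn_u]; have [//|wC] := boolP (w \in C).
apply/existsP; exists u; apply/andP; split.
  by case/orP: u_forces => [-> //|/(subsetP BC) ->]; rewrite orbT.
rewrite eqEsubset sub1set !inE wC andbT; apply/andP; split.
  rewrite -wn_u; apply/subsetP => x; rewrite !inE => /andP [-> xC].
  by apply: contra xC => /(subsetP BC).
by have := set11 w; rewrite -wn_u inE => /andP [].
Qed.

Lemma stalledE B : stalled B = (force_step B \subset B).
Proof.
apply/forallP/idP => [st | step_sub u].
  rewrite subUset subxx; apply/subsetP => w; rewrite inE => /existsP [u /andP [elig wn_u]].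
  by have := implyP (st u) elig; rewrite (eqP wn_u) cards1.
apply/implyP => elig; apply/cards1P => -[w wn_u].
have /(subsetP step_sub) wB : w \in force_step B.
  by rewrite !inE; apply/orP; right; apply/existsP; exists u; rewrite elig wn_u eqxx.
by have := set11 w; rewrite -wn_u inE wB andbF.
Qed.

Lemma forcing_setP S : reflect (forcing_set S) (iter #|T| force_step S == setT).
Proof.
have step_ext B : B \subset force_step B by exact: subsetUl.
apply: (iffP (iter_eqTP step_ext force_step_mono S)) => closedT B SB.
  by rewrite stalledE; exact: closedT.
by rewrite -stalledE; exact: closedT.
Qed.

Lemma forcing_setT : forcing_set setT.
Proof. by move=> B; rewrite subTset => /eqP. Qed.

Lemma zf_number_min S : forcing_set S -> zf_number <= #|S|.
Proof.
move/forcing_setP => zfS; rewrite /zf_number -minEnat.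
exact: (@bigmin_le_cond _ nat).
Qed.

Lemma zf_number_attained : exists2 S, forcing_set S & #|S| = zf_number.
Proof.
rewrite /zf_number -minEnat (@bigmin_eq_arg _ nat _ _ setT); last 2 first.
- exact/forcing_setP/forcing_setT.
- by move=> S _; exact: max_card.
by case: arg_minP => [|S /forcing_setP zfS _]; [exact/forcing_setP/forcing_setT | exists S].
Qed.

Lemma white_nbrsT u : white_nbrs G setT u = set0.
Proof. by apply/setP => w; rewrite !inE andbF. Qed.

Hypothesis irrG : irreflexive G.

(* Once [v] is removed from [A], it is the only white neighbour of [u]. *)
Lemma forcing_setD1 A u v :
  forcing_set A -> skew || (u \in A) -> white_nbrs G A u = set0 -> G u v ->
  forcing_set (A :\ v).
Proof.
move=> zfA u_elig wn_u0 uv B AvB stB; apply: (zfA _ _ stB).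
have nbr_uA w : G u w -> w \in A.
  by move=> uw; move/setP/(_ w): wn_u0; rewrite !inE uw => /negbFE.
have vu : u != v by apply: contraTneq uv => ->; rewrite irrG.
apply/subsetP => w wA; have [->|wv] := eqVneq w v; last first.
  by apply: (subsetP AvB); rewrite !inE wv.
apply: contraTT stB => vB; apply/forallPn; exists u; rewrite negb_imply negbK.
apply/andP; split.
  by case/orP: u_elig => [-> //|uA]; rewrite (subsetP AvB) ?orbT // !inE vu.
apply/cards1P; exists v; apply/setP => x; rewrite !inE.
have [->|xv] := eqVneq x v; first by rewrite uv.
case ux: (G u x) => //=; apply/negbF/(subsetP AvB).
by rewrite !inE xv nbr_uA.
Qed.

Lemma zf_number_ltn A u v :
  forcing_set A -> skew || (u \in A) -> white_nbrs G A u = set0 -> G u v ->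
  zf_number < #|A|.
Proof.
move=> zfA u_elig wn_u0 uv; have vA : v \in A.
  by move/setP/(_ v): wn_u0; rewrite !inE uv => /negbFE.
rewrite (cardsD1 v A) vA; exact: zf_number_min (forcing_setD1 zfA u_elig wn_u0 uv).
Qed.
End ZeroForcing.

Lemma Z_zf_number (T : finType) (G : rel T) : Z G = zf_number false G.
Proof. by []. Qed.

Lemma Zskew_zf_number (T : finType) (G : rel T) : Zskew G = zf_number true G.
Proof. by []. Qed.

Section EdgeBounds.
Variables (T : finType) (G : rel T) (u v : T).
Hypotheses (symG : symmetric G) (irrG : irreflexive G) (uv : G u v).

Lemma zf_number_lt_card skew : zf_number skew G < #|T|.
Proof.
rewrite -cardsT; apply: (zf_number_ltn irrG (@forcing_setT _ skew G) _ (white_nbrsT G u) uv).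
by rewrite inE orbT.
Qed.

Lemma zf_number_skew_lt_card : zf_number true G + 2 <= #|T|.
Proof.
have zfTv := forcing_setD1 irrG (@forcing_setT _ true G) isT (white_nbrsT G u) uv.
have wn_v0 : white_nbrs G (setT :\ v) v = set0.
  by apply/setP => w; rewrite !inE; case: eqVneq => [->|]; rewrite ?irrG ?andbF.
have vu : G v u by rewrite symG.
have := zf_number_ltn irrG zfTv isT wn_v0 vu.
by rewrite -cardsT (cardsD1 v setT) inE; lia.
Qed.
End EdgeBounds.

Section JoinZeroForcing.
Variables (n r : nat) (G : rel 'I_n) (skew : bool).
Local Notation J := (join_complete G r).
Implicit Types (S B : {set 'I_(n + r)}) (A : {set 'I_n}).

Lemma card_white_nbrs_join_l B x :
  #|white_nbrs J B (lshift r x)| = #|white_nbrs G (lpart B) x| + #|~: rpart B|.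
Proof.
rewrite card_lrpart; congr (_ + _); apply: eq_card => v; rewrite !inE.
  by rewrite join_complete_ll.
by rewrite join_complete_lr.
Qed.

Lemma card_white_nbrs_join_r B k :
  #|white_nbrs J B (rshift n k)| = #|~: lpart B| + #|~: rpart B :\ k|.
Proof.
rewrite card_lrpart; congr (_ + _); apply: eq_card => v; rewrite !inE.
  by rewrite join_complete_rl.
by rewrite join_complete_rr /complete_graph eq_sym.
Qed.

Lemma forcing_set_join_set A :
  forcing_set skew G A -> forcing_set skew J (join_set A setT).
Proof.
move=> zfA B AB stB.
have BrT : rpart B = setT.
  by apply/eqP; rewrite -subTset -{1}(rpart_join_set A [set: 'I_r]) rpartS.
apply: (lrpart_eqT _ BrT); apply: zfA.
  by rewrite -{1}(lpart_join_set A [set: 'I_r]) lpartS.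
apply/forallP => x; apply/implyP => x_elig.
have := implyP (forallP stB (lshift r x)); rewrite inE in x_elig.
by rewrite card_white_nbrs_join_l BrT setCT cards0 addn0 => ->.
Qed.

Lemma zf_number_join_le : zf_number skew J <= zf_number skew G + r.
Proof.
have [A zfA <-] := zf_number_attained skew G.
apply: leq_trans (zf_number_min (forcing_set_join_set zfA)) _.
by rewrite card_lrpart lpart_join_set rpart_join_set cardsT card_ord.
Qed.

Hypotheses (symG : symmetric G) (irrG : irreflexive G).
Hypothesis no_isolated : forall x, exists y, G x y.

Lemma forcing_set_lpart S : forcing_set skew J S -> forcing_set skew G (lpart S).
Proof.
move=> zfS B SB stB.
suff /(congr1 (@lpart n r)) : join_set B [set: 'I_r] = setT.
  by rewrite lpart_join_set lpartT.
apply: zfS.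
  apply/subsetP => v vS; case: (split_ordP v) vS => [a ->|k ->] vS.
    by rewrite mem_join_set_l (subsetP SB) // inE.
  by rewrite mem_join_set_r inE.
apply/forallP => u; apply/implyP; case: (split_ordP u) => [x ->|k ->] u_elig.
  rewrite card_white_nbrs_join_l lpart_join_set rpart_join_set setCT cards0 addn0.
  by apply: (implyP (forallP stB x)); rewrite mem_join_set_l in u_elig.
rewrite card_white_nbrs_join_r lpart_join_set rpart_join_set setCT set0D cards0 addn0.
(* A vertex of [K_r] would force the only white vertex [w] of [G]; then a
   neighbour [x] of [w] in [G] is blue and forces [w] as well. *)
apply/cards1P => -[w white_w]; have [x wx] := no_isolated w.
have xB : x \in B.
  by rewrite -[x \in B]negbK -in_setC white_w inE; apply: contraTneq wx => ->; rewrite irrG.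
have := implyP (forallP stB x); rewrite xB orbT => /(_ isT); apply/negP; rewrite negbK.
apply/cards1P; exists w; apply/setP => y; rewrite !inE -in_setC white_w inE.
by case: eqVneq => [->|]; rewrite ?andbF ?andbT // symG.
Qed.

Lemma zf_number_join_ge : 0 < n -> zf_number skew G + r <= zf_number skew J.
Proof.
move=> n_gt0; have [y0 edge0] := no_isolated (Ordinal n_gt0).
have [S zfS <-] := zf_number_attained skew J.
have zfA := forcing_set_lpart zfS.
have leA : zf_number skew G <= #|lpart S| := zf_number_min zfA.
have cardA : #|lpart S| + #|~: lpart S| = n by rewrite cardsC card_ord.
have cardC : #|rpart S| + #|~: rpart S| = r by rewrite cardsC card_ord.
rewrite card_lrpart; have [C0|C_gt0] := posnP #|~: rpart S|; first by lia.
have [u u_elig wn_u] : exists2 u, skew || (u \in S) & #|white_nbrs J S u| = 1.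
  have : ~~ stalled skew J S.
    by apply: contraTN C_gt0 => /(zfS _ (subxx _)) ->; rewrite rpartT setCT cards0.
  by case/forallPn => u; rewrite negb_imply negbK => /andP [? /eqP]; exists u.
case: (split_ordP u) u_elig wn_u => [x ->|k ->] u_elig.
  rewrite card_white_nbrs_join_l => wn_x.
  have /cards0_eq wn_x0 : #|white_nbrs G (lpart S) x| = 0 by lia.
  have [y xy] := no_isolated x.
  have : zf_number skew G < #|lpart S|.
    by apply: (zf_number_ltn irrG zfA _ wn_x0 xy); rewrite inE.
  lia.
rewrite card_white_nbrs_join_r => wn_k.
have cardCk : #|~: rpart S| = (rshift n k \notin S) + #|~: rpart S :\ k|.
  by rewrite [LHS](cardsD1 k) !inE.
case kS : (rshift n k \in S) in u_elig cardCk.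
  have : zf_number skew G < n.
    by rewrite -[n in _ < n]card_ord; exact: zf_number_lt_card irrG edge0 skew.
  lia.
have : zf_number skew G + 2 <= n.
  move: u_elig; rewrite orbF => ->; rewrite -[n in _ <= n]card_ord.
  exact: zf_number_skew_lt_card edge0.
lia.
Qed.

Lemma zf_number_join : 0 < n -> zf_number skew J = zf_number skew G + r.
Proof. by move=> n_gt0; apply/eqP; rewrite eqn_leq zf_number_join_le zf_number_join_ge. Qed.
End JoinZeroForcing.

Lemma connected_exists_nbr n (G : rel 'I_n) :
  1 < n -> connected_graph G -> forall x, exists y, G x y.
Proof.
move=> n_gt1 connG x.
have [y yx] : exists y : 'I_n, y != x.
  exists (if val x == 0 then Ordinal n_gt1 else Ordinal (ltnW n_gt1)).
  by rewrite -val_eqE; case: (eqVneq (val x) 0) => [->|] //=; rewrite eq_sym.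
case/connectP: (connG x y) => -[_ /= yx0|z p /= /andP [xz _] _]; last by exists z.
by rewrite yx0 eqxx in yx.
Qed.

Theorem proposition4p4 (n1 n2 : nat) (G1 : rel 'I_n1) (G2 : rel 'I_n2) :
  simple_graph G1 -> simple_graph G2 ->
  connected_graph G1 -> connected_graph G2 ->
  L_cospectral G1 G2 ->
  (Z G1 <> Z G2 ->
     forall r : nat, 1 <= r ->
       L_cospectral (join_complete G1 r) (join_complete G2 r) /\
       Z (join_complete G1 r) <> Z (join_complete G2 r)) /\
  (Zskew G1 <> Zskew G2 ->
     forall r : nat, 1 <= r ->
       L_cospectral (join_complete G1 r) (join_complete G2 r) /\
       Zskew (join_complete G1 r) <> Zskew (join_complete G2 r)).
Proof.
move=> simple1 simple2 conn1 conn2 cospG.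
have [[_ irr1] [_ irr2]] := (simple1, simple2).
have cospJ r := L_cospectral_join_complete r irr1 irr2 cospG.
case: cospG => n12 _; subst n2.
have [n_le1|n_gt1] := leqP n1 1.
  suff -> : G2 = G1 by split=> /(_ erefl).
  apply: functional_extensionality => x; apply: functional_extensionality => y.
  have -> : y = x by apply: ord_inj; have := ltn_ord x; have := ltn_ord y; lia.
  by rewrite irr1 irr2.
have zf_join skew (G : rel 'I_n1) r : simple_graph G -> connected_graph G ->
    zf_number skew (join_complete G r) = zf_number skew G + r.
  move=> [symG irrG] /(connected_exists_nbr n_gt1) no_isolated.
  exact: zf_number_join (ltnW n_gt1).
split=> neqZ r _; split=> //; move: neqZ.
  by rewrite !Z_zf_number !zf_join // => neqZ /addIn /neqZ.
by rewrite !Zskew_zf_number !zf_join // => neqZ /addIn /neqZ.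
Qed.
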